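(* Let $S$ be a semiring and let $\mathcal{A}=(A,X,Y,\sigma^A,\mu^A)$ be a sequential weighted automaton over $S$. Then there exists a Moore-type weighted automaton $\mathcal{B}=(B,X,Y,\sigma^B,\delta^B,\omega^B)$ over $S$ such that $[\![\mathcal{A}]\!]=[\![\mathcal{B}]\!]_{1n}$. Moreover, $\mathcal{B}$ can be chosen with $|B|\le |A|\cdot|Y|$.
   Context: A semiring $(S,+,\cdot,0,1)$ is a set with $(S,+,0)$ a commutative monoid, $(S,\cdot,1)$ a monoid (not necessarily commutative), $\cdot$ distributing over $+$ on both sides, and $0\cdot s=s\cdot 0=0$. $(X\times Y)^*$ is identified with the set of pairs $(u,v)\in X^*\times Y^*$ with $|u|=|v|$; its empty element is $(\varepsilon,\varepsilon)$. All automata have finite nonempty state set and finite nonempty alphabets $X,Y$. A sequential weighted automaton over $S$ is $\mathcal{A}=(A,X,Y,\sigma,\mu)$ with $\sigma:A\to S$ and $\mu:A\times X\times Y\times A\to S$. Its behavior $[\![\mathcal{A}]\!]:(X\times Y)^*\to S$ is $[\![\mathcal{A}]\!](\varepsilon,\varepsilon)=\sum_{a\in A}\sigma(a)$ and, for $u=x_1\cdots x_n$, $v=y_1\cdots y_n$ ($n\ge1$), $[\![\mathcal{A}]\!](u,v)=\sum_{(a_0,\dots,a_n)\in A^{n+1}}\sigma(a_0)\cdot\mu(a_0,x_1,y_1,a_1)\cdots\mu(a_{n-1},x_n,y_n,a_n)$. A Moore-type weighted automaton over $S$ is $\mathcal{B}=(B,X,Y,\sigma,\delta,\omega)$ with $\sigma:B\to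 S$, $\delta:B\times X\times B\to S$, $\omega:B\times Y\to S$; write $\delta_x(b,c)=\delta(b,x,c)$, $\omega_y(b)=\omega(b,y)$. Its $1n$-behavior is $[\![\mathcal{B}]\!]_{1n}(\varepsilon,\varepsilon)=\sum_{b\in B}\sigma(b)$ and, for $u=x_1\cdots x_n$, $v=y_1\cdots y_n$ with $n\ge1$, $[\![\mathcal{B}]\!]_{1n}(u,v)=\sum_{(b_0,\dots,b_n)\in B^{n+1}}\sigma(b_0)\cdot\delta_{x_1}(b_0,b_1)\cdot\omega_{y_1}(b_1)\cdots\delta_{x_n}(b_{n-1},b_n)\cdot\omega_{y_n}(b_n)$. *)

From HB Require Import structures.
From mathcomp Require Import all_boot all_order all_algebra.
Set Implicit Arguments. Unset Strict Implicit. Unset Printing Implicit Defensive.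
Import GRing.Theory.
Local Open Scope ring_scope.

(* S : a (possibly noncommutative, possibly trivial) semiring = pzSemiRingType.
   (X x Y)^* is represented as seq (X * Y): a list of pairs (x_i, y_i), i.e. a pair
   of words (u, v) of equal length. *)

Record seq_aut (S : pzSemiRingType) (A X Y : finType) := SeqAut {
  sa_sigma : A -> S;
  sa_mu : A -> X -> Y -> A -> S }.

Record moore_aut (S : pzSemiRingType) (B X Y : finType) := MooreAut {
  mo_sigma : B -> S;
  mo_delta : B -> X -> B -> S;
  mo_omega : B -> Y -> S }.

Definition seq_behavior (S : pzSemiRingType) (A X Y : finType)
    (M : seq_aut S A X Y) (w : seq (X * Y)) : S :=
  \sum_(a : {ffun 'I_(size w).+1 -> A})
     (sa_sigma M (a ord0) *
      \prod_(i < size w)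
         sa_mu M (a (inord i)) (tnth (in_tuple w) i).1 (tnth (in_tuple w) i).2
               (a (inord i.+1))).

Definition moore_behavior_1n (S : pzSemiRingType) (B X Y : finType)
    (N : moore_aut S B X Y) (w : seq (X * Y)) : S :=
  \sum_(b : {ffun 'I_(size w).+1 -> B})
     (mo_sigma N (b ord0) *
      \prod_(i < size w)
         (mo_delta N (b (inord i)) (tnth (in_tuple w) i).1 (b (inord i.+1)) *
          mo_omega N (b (inord i.+1)) (tnth (in_tuple w) i).2)).

From HB Require Import structures.
From mathcomp Require Import all_boot all_order all_algebra.
Import GRing.Theory.
Local Open Scope ring_scope.

(* The Moore automaton runs on pairs (a, y): the state a of the sequential
   automaton together with the output letter y just produced.  Its transitions
   guess the next output letter and pay the sequential weight for it, and the
   output function merely checks the guess.  A run of the Moore automaton thus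
   splits into a run a of the sequential one and a tape z of guessed letters;
   the weight vanishes unless z is the output word (preceded by an arbitrary
   fixed letter y0 in position 0), and for that tape it is the weight of a. *)

Lemma prodr_seq_eq0 (S : pzSemiRingType) (I : eqType) (r : seq I)
    (F : I -> S) (j : I) :
  j \in r -> F j = 0 -> \prod_(i <- r) F i = 0.
Proof.
move=> + Fj0; elim: r => [|i r IHr] //; rewrite in_cons big_cons.
by case/predU1P => [<-|/IHr ->]; rewrite ?Fj0 ?mul0r ?mulr0.
Qed.

Lemma big_ffun_pair (R : Type) (idx : R) (op : Monoid.com_law idx)
    (I J K : finType) (F : {ffun I -> J * K} -> R) :
  \big[op/idx]_(f : {ffun I -> J * K}) F f =
  \big[op/idx]_(g : {ffun I -> J}) \big[op/idx]_(h : {ffun I -> K})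
     F [ffun i => (g i, h i)].
Proof.
rewrite pair_bigA (reindex (fun gh : {ffun I -> J} * {ffun I -> K} =>
  [ffun i => (gh.1 i, gh.2 i)])) //=.
exists (fun f => ([ffun i => (f i).1], [ffun i => (f i).2])) => [[g h]|f] _.
  by congr pair; apply/ffunP => i; rewrite !ffunE.
by apply/ffunP => i; rewrite !ffunE; case: (f i).
Qed.

Lemma tnth_in_tuple_snd {X Y : Type} (y0 : Y) (w : seq (X * Y))
    (i : 'I_(size w)) :
  (tnth (in_tuple w) i).2 = nth y0 (unzip2 w) i.
Proof.
by rewrite (nth_map (tnth (in_tuple w) i)) // [in LHS](tnth_nth (tnth (in_tuple w) i)).
Qed.

Section MooreOfSeq.

Context {S : pzSemiRingType} {A X Y : finType}.

Definition seq_run_weight (M : seq_aut S A X Y) (w : seq (X * Y))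
    (a : {ffun 'I_(size w).+1 -> A}) : S :=
  sa_sigma M (a ord0) *
  \prod_(i < size w)
     sa_mu M (a (inord i)) (tnth (in_tuple w) i).1 (tnth (in_tuple w) i).2
           (a (inord i.+1)).

Definition moore_run_weight {B : finType} (N : moore_aut S B X Y)
    (w : seq (X * Y)) (b : {ffun 'I_(size w).+1 -> B}) : S :=
  mo_sigma N (b ord0) *
  \prod_(i < size w)
     (mo_delta N (b (inord i)) (tnth (in_tuple w) i).1 (b (inord i.+1)) *
      mo_omega N (b (inord i.+1)) (tnth (in_tuple w) i).2).

Variables (M : seq_aut S A X Y) (y0 : Y).

Definition moore_of_seq : moore_aut S (A * Y)%type X Y :=
  MooreAut (fun b => if b.2 == y0 then sa_sigma M b.1 else 0)
    (fun b x c => sa_mu M b.1 x c.2 c.1)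
    (fun b y => if b.2 == y then 1 else 0).

Definition output_tape (w : seq (X * Y)) : {ffun 'I_(size w).+1 -> Y} :=
  [ffun i : 'I_(size w).+1 => nth y0 (y0 :: unzip2 w) i].

Lemma output_tapeS (w : seq (X * Y)) (i : 'I_(size w)) :
  output_tape w (inord i.+1) = (tnth (in_tuple w) i).2.
Proof. by rewrite ffunE inordK ?ltnS // (tnth_in_tuple_snd y0). Qed.

Lemma moore_of_seq_run_weight (w : seq (X * Y))
    (a : {ffun 'I_(size w).+1 -> A}) (z : {ffun 'I_(size w).+1 -> Y}) :
  moore_run_weight moore_of_seq w [ffun i => (a i, z i)] =
  if z == output_tape w then seq_run_weight M w a else 0.
Proof.
rewrite /moore_run_weight /seq_run_weight /= ffunE /=.
under eq_bigr do rewrite !ffunE /=.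
have [->|z_out] := eqVneq z (output_tape w).
  rewrite ffunE eqxx; congr (_ * _); apply: eq_bigr => i _.
  by rewrite output_tapeS eqxx mulr1.
have [[[|k] lt_k] /negPf z_k] : exists i, z i != output_tape w i.
  apply/existsP; apply: contraR z_out => /existsPn z_eq.
  by apply/eqP/ffunP => i; exact/eqP/negPn/z_eq.
  have -> : ord0 = Ordinal lt_k by exact: val_inj.
  by move: z_k; rewrite ffunE => ->; rewrite mul0r.
have lt_k' : (k < size w)%N by [].
rewrite (@prodr_seq_eq0 _ _ _ _ (Ordinal lt_k')) ?mulr0 ?mem_index_enum //.
have inord_k1 : inord k.+1 = Ordinal lt_k by apply: val_inj; rewrite /= inordK.
by rewrite -(output_tapeS _ (Ordinal lt_k')) /= inord_k1 z_k mulr0.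
Qed.

End MooreOfSeq.

Theorem theorem3 (S : pzSemiRingType) (A X Y : finType)
    (hA : (0 < #|A|)%N) (hX : (0 < #|X|)%N) (hY : (0 < #|Y|)%N)
    (M : seq_aut S A X Y) :
  exists (B : finType) (N : moore_aut S B X Y),
    (0 < #|B|)%N /\ (#|B| <= #|A| * #|Y|)%N /\
    forall w : seq (X * Y), seq_behavior M w = moore_behavior_1n N w.
Proof.
have /card_gt0P [y0 _] := hY.
exists (A * Y)%type, (moore_of_seq M y0).
split; first by rewrite card_prod muln_gt0 hA hY.
split; first by rewrite card_prod.
move=> w; rewrite /moore_behavior_1n big_ffun_pair; apply: eq_bigr => a _.
rewrite (eq_bigr _ (fun z _ => moore_of_seq_run_weight M y0 w a z)).
by rewrite -big_mkcond big_pred1_eq.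
Qed.
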